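(* Let $w$ be an infinite word on $\mathcal{A}$ with infinitely many palindromic prefixes; let $(n_i)_{i\ge1}$ be the increasing sequence of their lengths ($n_1=0$) and $\pi_i$ the palindromic prefix of $w$ of length $n_i$. Let $i_0$ be an integer. The following are equivalent: (i) $n_{i+1}\le 2n_i+1$ for all $i\ge i_0$; (ii) there exists a reduced function $\psi$ such that for every $i\ge i_0$, either $\psi(i)\in\mathcal{A}$ and $\pi_{i+1}=\pi_i\,\psi(i)\,\pi_i$, or $\psi(i)\in\mathbb{N}^*$ and $\pi_{i+1}=\pi_i b$, where $b$ is the word with $\pi_i=\pi_{\psi(i)}b$ (i.e. $\pi_{i+1}=\pi_i\pi_{\psi(i)}^{-1}\pi_i$).
   Context: $\mathcal{A}$ is an alphabet (finite or infinite) disjoint from $\mathbb{N}^*=\{1,2,\dots\}$; the empty word is a palindrome. A function here is a map $\psi:\mathbb{N}^*\to\mathbb{N}^*\sqcup\mathcal{A}$ such that for every $n\ge1$ either $\psi(n)\in\mathcal{A}$ or $1\le\psi(n)\le n-1$. Let $(t_k)_{k\ge0}$ be the (finite or infinite) family, in increasing order, of all $n\ge1$ with $\psi(n)\in\mathcal{A}$ or $1\le\psi(n)\le n-2$. $\psi$ is reduced if for every $k\ge1$ such that $t_k$ exists: $\psi(t_k)\ne\psi(t_{k-1})$, and either $\psi(t_k)\in\mathcal{A}$ or $\psi(t_k)<t_{k-1}$. *)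

From mathcomp Require Import all_boot.
Set Implicit Arguments. Unset Strict Implicit. Unset Printing Implicit Defensive.

Definition palindrome {A : Type} (s : seq A) : Prop := rev s = s.

Definition prefix {A : Type} (w : nat -> A) (k : nat) : seq A := mkseq w k.

Definition inf_pal_prefixes {A : Type} (w : nat -> A) : Prop :=
  forall m, exists k, m <= k /\ palindrome (prefix w k).

(* (n_i)_{i>=1} is the increasing enumeration of the lengths of the palindromic
   prefixes of w (the value n 0 is irrelevant). *)
Definition pal_lengths_enum {A : Type} (w : nat -> A) (n : nat -> nat) : Prop :=
  (forall i, 1 <= i -> n i < n i.+1) /\
  (forall k, palindrome (prefix w k) <-> exists2 i, 1 <= i & n i = k).

Definition pal_prefix {A : Type} (w : nat -> A) (n : nat -> nat) (i : nat) : seq A :=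
  prefix w (n i).

(* A "function" psi : N* -> N* ⊔ A, encoded as nat -> nat + A (value at 0
   irrelevant; inl m with m >= 1 is an element of N*, inr a an element of A):
   for every n >= 1, psi n ∈ A or 1 <= psi n <= n-1. *)
Definition is_function {A : Type} (psi : nat -> nat + A) : Prop :=
  forall m, 1 <= m ->
    match psi m with inl p => 1 <= p <= m.-1 | inr _ => true end.

(* membership in the family (t_k): m >= 1 and psi m ∈ A or 1 <= psi m <= m-2 *)
Definition in_t {A : Type} (psi : nat -> nat + A) (m : nat) : Prop :=
  1 <= m /\ match psi m with inl p => 1 <= p <= m.-2 | inr _ => true end.

Definition consecutive_t {A : Type} (psi : nat -> nat + A) (m m' : nat) : Prop :=
  [/\ m < m', in_t psi m, in_t psi m' & forall j, m < j < m' -> ~ in_t psi j].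

Definition reduced {A : Type} (psi : nat -> nat + A) : Prop :=
  is_function psi /\
  forall m m', consecutive_t psi m m' ->
    psi m' <> psi m /\
    match psi m' with inl p => p < m | inr _ => true end.

(* Since pi_i is a palindromic suffix of pi_(i+1), the word pi_(i+1) has
   period n_(i+1) - n_i.  Hence, when n_(i+1) <= 2 n_i + 1, either
   n_(i+1) = 2 n_i + 1 and pi_(i+1) = pi_i a pi_i, or the prefix of length
   2 n_i - n_(i+1) of pi_i is a palindrome pi_p and pi_(i+1) = pi_i pi_p^-1 pi_i;
   this defines psi(i).
   An index i lies outside (t_k) exactly when psi(i) = i - 1, that is when
   n_(i+1) - n_i = n_i - n_(i-1).  So between consecutive members m < m' of
   (t_k) the lengths grow by a constant step d, and pi_m' has period d.  Each
   way reducedness can fail at (m, m') (psi(m') = psi(m), or psi(m') = p with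
   m <= p) forces n_(m'+1) = n_m' + q d with q >= 2 and q d <= n_m' + 1; then
   pi_(m'+1) has period d as well, so its prefix of length n_(m'+1) - d is a
   palindrome strictly between pi_m' and pi_(m'+1), which is absurd.
   Below i_0 the values of psi are free: only 1 and i_0 - 1 are put in (t_k),
   and they are sent to letters that keep psi reduced.  This needs two distinct
   letters, unless w is constant, in which case the bound holds from i = 1 on.
   The converse is a length count. *)

From Pilot Require Import Defs.
From mathcomp Require Import all_boot zify.
From Stdlib Require Import ClassicalEpsilon.

Set Implicit Arguments.
Unset Strict Implicit.
Unset Printing Implicit Defensive.

Definition periodic {A : Type} (w : nat -> A) (d N : nat) : Prop :=
  forall x, x + d < N -> w (x + d) = w x.

Section Words.
Variables (A : Type) (w : nat -> A).

Lemma palindrome_prefixP k :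
  palindrome (Defs.prefix w k) <-> forall x, x < k -> w x = w (k.-1 - x).
Proof.
rewrite /palindrome /Defs.prefix; split=> [Hk x Hx|Hk].
- have := congr1 (fun s => nth (w 0) s x) Hk => /=.
  by rewrite nth_rev ?size_mkseq // !nth_mkseq //; [move=> <-; congr w; lia | lia].
- apply: (@eq_from_nth _ (w 0)); first by rewrite size_rev.
  move=> x; rewrite size_rev size_mkseq => Hx.
  rewrite nth_rev ?size_mkseq // !nth_mkseq //; last by lia.
  by rewrite Hk; [congr w | ..]; lia.
Qed.

Lemma periodic_modP d N :
  periodic w d N <-> forall x, x < N -> w x = w (x %% d).
Proof.
split=> [Hd|Hd x Hx]; last by rewrite Hd // modnDr -Hd //; lia.
elim/ltn_ind=> x IH HxN.
have [->|d_gt0] := posnP d; first by rewrite modn0.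
case: (ltnP x d) => [/modn_small -> //|Hxd].
rewrite -(subnK Hxd) Hd; last by lia.
by rewrite modnDr IH //; lia.
Qed.

Lemma periodic_palindromes L L' :
  palindrome (Defs.prefix w L) -> palindrome (Defs.prefix w L') -> L' <= L ->
  periodic w (L - L') L.
Proof.
move=> /palindrome_prefixP HL /palindrome_prefixP HL' le_L'L x Hx.
by rewrite HL // HL'; [congr w | ..]; lia.
Qed.

Lemma palindrome_prefix_sub d L :
  palindrome (Defs.prefix w L) -> periodic w d L -> palindrome (Defs.prefix w (L - d)).
Proof.
move=> /palindrome_prefixP HL Hd; apply/palindrome_prefixP => x Hx.
rewrite -(Hd x); last by lia.
by rewrite HL; [congr w | ..]; lia.
Qed.

Lemma periodic_dvd_extend d e N L :
  0 < e -> d %| e -> e <= N -> periodic w d N -> periodic w e L ->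
  periodic w d L.
Proof.
move=> e_gt0 /dvdnP[q Ee] le_eN /periodic_modP HN He; subst e.
apply/periodic_modP.
elim/ltn_ind=> x IH HxL; case: (ltnP x N) => [|le_Nx]; first exact: HN.
have le_ex : q * d <= x by lia.
rewrite -(subnK le_ex) He; last by lia.
by rewrite addnC modnMDl IH //; lia.
Qed.

Lemma periodic_le d N L : N <= L -> periodic w d L -> periodic w d N.
Proof. by move=> le_NL Hd x Hx; apply: Hd; apply: leq_trans le_NL. Qed.

Lemma prefixD a b :
  Defs.prefix w (a + b) = Defs.prefix w a ++ mkseq (fun x => w (a + x)) b.
Proof.
rewrite /Defs.prefix /mkseq iotaD map_cat.
by rewrite -[X in iota X b]addn0 iotaDl -map_comp.
Qed.

Lemma prefix_periodic d N L :
  periodic w d L -> d <= N <= L ->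
  Defs.prefix w L = Defs.prefix w N ++ mkseq (fun x => w (N - d + x)) (L - N).
Proof.
move=> Hd le_dNL; rewrite -[in LHS](subnKC (proj2 (andP le_dNL))) prefixD.
congr (_ ++ _); apply/eq_in_map => x; rewrite mem_iota => /andP[_ Hx].
by rewrite -(Hd (N - d + x)); [congr w | ..]; lia.
Qed.

End Words.

Lemma arith_progression (f : nat -> nat) m m' :
  f m <= f m.+1 -> (forall j, m < j < m' -> f j.+1 + f j.-1 = 2 * f j) ->
  forall k, m + k <= m' -> f (m + k) = f m + k * (f m.+1 - f m).
Proof.
move=> le_f Hf; elim/ltn_ind=> -[|[|k]] IH le_km'; first by rewrite mul0n !addn0.
  by rewrite addn1; lia.
have := Hf (m + k.+1); rewrite !addnS /= -!addnS.
rewrite (IH k) ?(IH k.+1) ?mulSn; lia.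
Qed.

Section PalindromicLengths.
Variables (A : Type) (w : nat -> A) (n : nat -> nat).
Hypothesis Hn : pal_lengths_enum w n.

Lemma palindrome_pal_length i : 1 <= i -> palindrome (Defs.prefix w (n i)).
Proof. by move=> i_gt0; apply/(proj2 Hn); exists i. Qed.

Lemma pal_lengthP k :
  palindrome (Defs.prefix w k) -> exists2 i, 1 <= i & n i = k.
Proof. exact: (proj1 (proj2 Hn k)). Qed.

Lemma ltn_pal_lengths i j : 1 <= i -> 1 <= j -> (n i < n j) = (i < j).
Proof.
have homo_n : {in [pred i | 0 < i] &, {homo n : i j / i < j}}.
  apply: homo_ltn_in => [y x z|x y|x]; [exact: ltn_trans| |].
  - by move=> x_gt0 _ k /andP[lt_xk _]; apply: leq_ltn_trans lt_xk.
  - by move=> x_gt0 _; apply: (proj1 Hn).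
move=> i_gt0 j_gt0; apply/idP/idP; last exact: homo_n.
apply: contraLR; rewrite -!leqNgt leq_eqVlt => /orP[/eqP -> //|lt_ji].
exact/ltnW/homo_n.
Qed.

Lemma leq_pal_lengths i j : 1 <= i -> 1 <= j -> (n i <= n j) = (i <= j).
Proof. by move=> i_gt0 j_gt0; rewrite leqNgt ltn_pal_lengths // -leqNgt. Qed.

Lemma pal_lengths_step i : 1 <= i -> n i.+1 = n i + (n i.+1 - n i).
Proof. by move=> i_gt0; rewrite subnKC // ltnW // ltn_pal_lengths. Qed.

Lemma no_palindrome_between i k :
  1 <= i -> n i < k < n i.+1 -> ~ palindrome (Defs.prefix w k).
Proof.
move=> i_gt0 /andP[lt_ik lt_ki] /pal_lengthP[j j_gt0 Ej]; subst k.
move: lt_ik lt_ki; rewrite !ltn_pal_lengths //; lia.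
Qed.

Lemma no_periodic_jump j d q N :
  1 <= j -> 0 < d -> 2 <= q -> n j.+1 = n j + q * d -> q * d <= N ->
  periodic w d N -> False.
Proof.
move=> j_gt0 d_gt0 q_ge2 Ej le_qdN Hd.
have per_qd : periodic w (q * d) (n j.+1).
  have := periodic_palindromes (palindrome_pal_length (leqW j_gt0))
    (palindrome_pal_length j_gt0).
  by rewrite Ej addKn; apply; lia.
have per_d : periodic w d (n j.+1).
  by apply: (periodic_dvd_extend _ (dvdn_mull q (dvdnn d)) le_qdN Hd per_qd); nia.
apply: (no_palindrome_between j_gt0 (k := n j.+1 - d)); last first.
  exact: palindrome_prefix_sub (palindrome_pal_length (leqW j_gt0)) per_d.
rewrite Ej; apply/andP; split; nia.
Qed.

Section Block.
Variables m m' d : nat.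
Hypotheses (m_gt0 : 0 < m) (lt_mm' : m < m') (step_m : n m.+1 = n m + d).
Hypothesis block : forall j, m < j < m' -> n j.+1 + n j.-1 = 2 * n j.

Lemma block_lengths j : m <= j <= m' -> n j = n m + (j - m) * d.
Proof.
move=> /andP[le_mj le_jm']; have -> : d = n m.+1 - n m by rewrite step_m addKn.
rewrite -{1}(subnKC le_mj).
by apply: (arith_progression _ block); rewrite ?subnKC // step_m leq_addr.
Qed.

Lemma block_step_gt0 : 0 < d.
Proof. by rewrite -(ltn_add2l (n m)) addn0 -step_m ltn_pal_lengths. Qed.

Lemma block_periodic : periodic w d (n m').
Proof.
have Ed : n m' - n m'.-1 = d.
  rewrite (block_lengths (j := m')) ?(block_lengths (j := m'.-1)); try lia.
  by rewrite (_ : m' - m = (m'.-1 - m).+1) ?mulSn; lia.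
rewrite -Ed; apply: periodic_palindromes; try apply: palindrome_pal_length; try lia.
by apply/ltnW; rewrite ltn_pal_lengths; lia.
Qed.

Lemma no_block_jump q :
  2 <= q -> n m'.+1 = n m' + q * d -> q * d <= n m' -> False.
Proof.
move=> q_ge2 Em' le_qd.
by apply: (no_periodic_jump _ block_step_gt0 q_ge2 Em' le_qd block_periodic); lia.
Qed.

Lemma no_block_back_reference p :
  m <= p -> p.+2 <= m' -> n p + n m'.+1 = 2 * n m' -> False.
Proof.
move=> le_mp le_pm' Ep.
have Em' : n m' = n p + (m' - p) * d.
  rewrite (block_lengths (j := m')) ?(block_lengths (j := p)) -?addnA -?mulnDl; try lia.
  by congr (_ + _ * _); lia.
by apply: (no_block_jump (q := m' - p)); move: Ep; rewrite Em'; lia.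
Qed.

Lemma no_block_repeated_reference p :
  n p + n m.+1 = 2 * n m -> n p + n m'.+1 = 2 * n m' -> False.
Proof.
move=> Epm Epm'; apply: (no_block_jump (q := (m' - m).+1)); first lia.
all: rewrite (block_lengths (j := m')) ?mulSn in Epm' *; lia.
Qed.

Lemma block_letter_neq :
  n m.+1 = 2 * n m + 1 -> n m'.+1 = 2 * n m' + 1 -> w (n m') <> w (n m).
Proof.
move=> Em Em' Ew.
have Ed : d = (n m).+1 by lia.
have En : n m' = n m + (m' - m) * d by apply: block_lengths; lia.
apply: (no_periodic_jump (j := m') (q := (m' - m).+1) (N := (n m').+1) _
  block_step_gt0); rewrite ?mulSn; try lia.
have /periodic_modP per := block_periodic.
apply/periodic_modP => x; rewrite ltnS leq_eqVlt => /orP[/eqP ->|]; last exact: per.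
by rewrite Ew {1}En addnC modnMDl modn_small //; lia.
Qed.

End Block.

Definition pal_index (k : nat) : nat :=
  epsilon (inhabits 0) (fun p => 1 <= p /\ n p = k).

Definition pal_psi (i : nat) : nat + A :=
  if n i.+1 == 2 * n i + 1 then inr (w (n i))
  else inl (pal_index (2 * n i - n i.+1)).

Lemma pal_indexP k :
  palindrome (Defs.prefix w k) -> 1 <= pal_index k /\ n (pal_index k) = k.
Proof.
move=> /pal_lengthP[i i_gt0 Ei].
by apply: (epsilon_spec _ (fun p => 1 <= p /\ n p = k)); exists i.
Qed.

Lemma pal_lengths_periodic i :
  1 <= i -> periodic w (n i.+1 - n i) (n i.+1).
Proof.
move=> i_gt0; apply: periodic_palindromes; try exact: palindrome_pal_length.
by apply/ltnW; rewrite ltn_pal_lengths.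
Qed.

Section Step.
Variable i : nat.
Hypotheses (i_gt0 : 0 < i) (step_le : n i.+1 <= 2 * n i + 1).

Lemma pal_psi_inl p :
  pal_psi i = inl p -> [/\ 1 <= p, p < i & n p + n i.+1 = 2 * n i].
Proof.
rewrite /pal_psi; case: eqP => // ne_step [<-].
have lt_step : n i < n i.+1 by rewrite ltn_pal_lengths.
have pal_border : palindrome (Defs.prefix w (2 * n i - n i.+1)).
  rewrite (_ : 2 * n i - n i.+1 = n i - (n i.+1 - n i)); last by lia.
  apply: palindrome_prefix_sub (palindrome_pal_length i_gt0) _.
  by apply: periodic_le (pal_lengths_periodic i_gt0); apply: ltnW.
have [p_gt0 Ep] := pal_indexP pal_border.
by split=> //; [rewrite -ltn_pal_lengths // Ep | rewrite Ep]; lia.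
Qed.

Lemma pal_psi_inr a : pal_psi i = inr a -> n i.+1 = 2 * n i + 1 /\ a = w (n i).
Proof. by rewrite /pal_psi; case: eqP => // Estep [<-]. Qed.

Lemma pal_psi_not_t :
  ~ in_t pal_psi i -> n i.+1 + n i.-1 = 2 * n i.
Proof.
rewrite /in_t; case E: (pal_psi i) => [p|a]; last by case.
have [p_gt0 lt_pi Ep] := pal_psi_inl E.
case: (leqP p i.-2) => [_|gt_p] not_t; first by case: not_t; rewrite p_gt0.
by rewrite (_ : i.-1 = p); lia.
Qed.

Lemma pal_psi_spec :
  (exists a, pal_psi i = inr a /\
     pal_prefix w n i.+1 = pal_prefix w n i ++ a :: pal_prefix w n i) \/
  (exists p, pal_psi i = inl p /\
     exists b, pal_prefix w n i = pal_prefix w n p ++ b /\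
               pal_prefix w n i.+1 = pal_prefix w n i ++ b).
Proof.
have lt_step : n i < n i.+1 by rewrite ltn_pal_lengths.
have per := pal_lengths_periodic i_gt0.
rewrite /pal_prefix; case E: (pal_psi i) => [p|a]; [right; exists p|left; exists a].
  have [_ _ Ep] := pal_psi_inl E.
  split=> //; exists (mkseq (fun x => w (n p + x)) (n i - n p)); split.
    by rewrite -prefixD subnKC //; lia.
  rewrite (prefix_periodic (N := n i) per); last by lia.
  rewrite (_ : n i - (n i.+1 - n i) = n p); last by lia.
  by rewrite (_ : n i.+1 - n i = n i - n p); last lia.
have [Estep ->] := pal_psi_inr E; split=> //.
rewrite (prefix_periodic (N := n i + 1) per) ?prefixD; last by lia.
rewrite -catA /= addn0; congr (_ ++ _ :: _).
rewrite (_ : n i + 1 - (n i.+1 - n i) = 0); last by lia.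
by rewrite (_ : n i.+1 - (n i + 1) = n i); last lia.
Qed.

End Step.

Definition first_t (psi : nat -> nat + A) (J m : nat) : Prop :=
  [/\ J <= m, in_t psi m & forall j, J <= j < m -> ~ in_t psi j].

Lemma first_t_uniq (psi : nat -> nat + A) J m1 m2 :
  first_t psi J m1 -> first_t psi J m2 -> m1 = m2.
Proof.
move=> [le_J1 t_1 before_1] [le_J2 t_2 before_2].
case: (ltngtP m1 m2) => // [lt_12|lt_21].
- by case: (before_2 m1); rewrite ?le_J1.
- by case: (before_1 m2); rewrite ?le_J2.
Qed.

(* [inl i.-1] keeps [i] out of (t_k): below [J] only [1] and [J.-1] are in it. *)
Definition padded_pal_psi (J : nat) (c_last c_first : A) (i : nat) : nat + A :=
  if J <= i then pal_psi i
  else if i == J.-1 then inr c_last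
  else if i == 1 then inr c_first
  else inl i.-1.

Section Padding.
Variables (J : nat) (c_last c_first : A).
Hypotheses (J_gt0 : 0 < J) (step_le : forall i, J <= i -> n i.+1 <= 2 * n i + 1).
Hypothesis first_neq_last : 2 < J -> c_first <> c_last.
Hypothesis last_fresh : 2 <= J ->
  forall m a, first_t pal_psi J m -> pal_psi m = inr a -> c_last <> a.
Local Notation psi := (padded_pal_psi J c_last c_first).

Lemma padded_pal_psi_tail i : J <= i -> psi i = pal_psi i.
Proof. by rewrite /padded_pal_psi => ->. Qed.

Lemma in_t_padded_tail j : J <= j -> in_t psi j <-> in_t pal_psi j.
Proof. by move=> le_Jj; rewrite /in_t padded_pal_psi_tail. Qed.

Lemma padded_pal_psi_last : psi J.-1 = inr c_last.
Proof. by rewrite /padded_pal_psi leqNgt ltn_predL J_gt0 eqxx. Qed.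

Lemma padded_pal_psi_first : 2 < J -> psi 1 = inr c_first.
Proof.
move=> J_gt2; rewrite /padded_pal_psi.
by case: leqP => [|_]; [lia | case: eqP => [|_]; [lia | rewrite eqxx]].
Qed.

Lemma in_t_padded_last : 2 <= J -> in_t psi J.-1.
Proof. by move=> J_ge2; rewrite /in_t padded_pal_psi_last; split=> //; lia. Qed.

Lemma in_t_padded_head j : j < J -> in_t psi j -> j = 1 \/ j = J.-1.
Proof.
move=> lt_jJ; rewrite /in_t /padded_pal_psi (leqNgt J j) lt_jJ /=.
case: eqP => [->|_]; first by right.
by case: eqP => [->|_]; [left | case=> j_gt0 /andP[_]; lia].
Qed.

Lemma is_function_padded : is_function psi.
Proof.
move=> i i_gt0; case: (leqP J i) => [le_Ji|lt_iJ].
  rewrite padded_pal_psi_tail //; case E: (pal_psi i) => [p|//].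
  by have [] := pal_psi_inl i_gt0 (step_le le_Ji) E; lia.
rewrite /padded_pal_psi leqNgt lt_iJ /=.
by case: eqP => // _; case: eqP => // ne_i1; lia.
Qed.

Lemma padded_block m m' :
  consecutive_t psi m m' -> J <= m' ->
  J.-1 <= m /\ forall j, m < j < m' -> n j.+1 + n j.-1 = 2 * n j.
Proof.
case=> lt_mm' [m_gt0 _] _ between le_Jm'.
have le_m : J.-1 <= m.
  rewrite leqNgt; apply/negP => lt_m.
  by apply: (between J.-1); [lia | apply: in_t_padded_last; lia].
split=> // j /andP[lt_mj lt_jm']; have le_Jj : J <= j by lia.
apply: (pal_psi_not_t _ (step_le le_Jj)); first lia.
by rewrite -in_t_padded_tail //; apply: between; lia.
Qed.

Lemma reduced_padded_head m m' :
  consecutive_t psi m m' -> m' < J ->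
  psi m' <> psi m /\ match psi m' with inl p => p < m | inr _ => true end.
Proof.
case=> lt_mm' t_m t_m' _ lt_m'J.
have m'E : m' = J.-1 by case: (in_t_padded_head lt_m'J t_m'); case: t_m; lia.
have mE : m = 1 by case: (in_t_padded_head (ltn_trans lt_mm' lt_m'J) t_m); lia.
rewrite m'E mE padded_pal_psi_last padded_pal_psi_first; last by lia.
by split=> // -[/esym]; apply: first_neq_last; lia.
Qed.

Section Tail.
Variables m m' : nat.
Hypotheses (cons : consecutive_t psi m m') (le_Jm' : J <= m').

Lemma padded_back_reference p :
  pal_psi m' = inl p -> p < m /\ psi m <> inl p.
Proof.
move=> E'; have [lt_mm' [m_gt0 _] t_m' _] := cons.
have [le_m block] := padded_block cons le_Jm'.
have step_m := pal_lengths_step m_gt0.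
have [p_gt0 _ Ep] := pal_psi_inl (ltn_trans m_gt0 lt_mm') (step_le le_Jm') E'.
have le_p : p <= m'.-2.
  by move: t_m'; rewrite /in_t padded_pal_psi_tail // E' => -[_ /andP[]].
split.
  rewrite ltnNge; apply/negP => le_mp.
  by apply: (no_block_back_reference m_gt0 lt_mm' step_m block le_mp _ Ep); lia.
case: (leqP J m) => [le_Jm|lt_mJ]; last first.
  by rewrite (_ : m = J.-1) ?padded_pal_psi_last; last lia.
rewrite padded_pal_psi_tail // => Em.
have [_ _ Epm] := pal_psi_inl m_gt0 (step_le le_Jm) Em.
exact: (no_block_repeated_reference m_gt0 lt_mm' step_m block Epm Ep).
Qed.

Lemma padded_letter a : pal_psi m' = inr a -> psi m <> inr a.
Proof.
move=> E'; have [lt_mm' [m_gt0 _] t_m' between] := cons.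
have [le_m block] := padded_block cons le_Jm'.
have [step_m' Ea] := pal_psi_inr E'; subst a.
case: (leqP J m) => [le_Jm|lt_mJ].
  rewrite padded_pal_psi_tail // => Em.
  have [step_mm Ew] := pal_psi_inr Em.
  exact: (block_letter_neq m_gt0 lt_mm' (pal_lengths_step m_gt0) block step_mm step_m' Ew).
rewrite (_ : m = J.-1) ?padded_pal_psi_last; last by lia.
case=> Ew; apply: (last_fresh _ _ E') Ew; first lia.
split=> //; first by rewrite -in_t_padded_tail.
by move=> j le_Jj_m'; rewrite -in_t_padded_tail; [apply: between | ]; lia.
Qed.

End Tail.

Lemma reduced_padded : reduced psi.
Proof.
split=> [|m m' cons]; first exact: is_function_padded.
have [lt_m'J|le_Jm'] := ltnP m' J.
  exact: reduced_padded_head.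
rewrite padded_pal_psi_tail //; case E': (pal_psi m') => [p|a].
  by have [lt_pm ne_p] := padded_back_reference cons le_Jm' E'; split=> // /esym.
by split=> // /esym /(padded_letter cons le_Jm' E').
Qed.

End Padding.

Lemma exists_reduced_padding J :
  0 < J -> (forall i, J <= i -> n i.+1 <= 2 * n i + 1) ->
  (2 <= J -> exists a b : A, a <> b) ->
  exists psi, reduced psi /\ forall i, J <= i -> psi i = pal_psi i.
Proof.
move=> J_gt0 step_le two_letters.
suff [c_last [c_first [first_neq_last last_fresh]]] : exists c_last c_first,
    (2 < J -> c_first <> c_last) /\
    (2 <= J -> forall m a, first_t pal_psi J m -> pal_psi m = inr a -> c_last <> a).
  exists (padded_pal_psi J c_last c_first); split; last exact: padded_pal_psi_tail.
  exact: reduced_padded.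
have [J_ge2|lt_J2] := leqP 2 J; last by exists (w 0), (w 0); split=> ?; lia.
have [a [b ne_ab]] := two_letters J_ge2.
have other x : exists y : A, y <> x.
  by case: (classic (a = x)) => [<-|ne_ax]; [exists b => /esym | exists a].
have [c_last last_fresh] : exists c, forall m a,
    first_t pal_psi J m -> pal_psi m = inr a -> c <> a.
  case: (classic (exists m a, first_t pal_psi J m /\ pal_psi m = inr a)).
    move=> [m0 [a0 [first_m0 E0]]]; have [c ne_c] := other a0.
    by exists c => m a1 first_m E; move: E; rewrite (first_t_uniq first_m first_m0) E0 => -[<-].
  by move=> none; exists a => m a1 first_m E; case: none; exists m, a1.
have [c_first ne_first] := other c_last.
by exists c_last, c_first.
Qed.

Lemma pal_lengths_const :
  (forall x, w x = w 0) -> forall i, 1 <= i -> n i.+1 <= 2 * n i + 1.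
Proof.
move=> const i i_gt0.
have : palindrome (Defs.prefix w (n i).+1).
  by apply/palindrome_prefixP => x _; rewrite !const.
case/pal_lengthP=> j j_gt0 Ej.
have : i < j by rewrite -ltn_pal_lengths // Ej.
by rewrite -(leq_pal_lengths (leqW i_gt0) j_gt0) Ej; lia.
Qed.

Lemma exists_reduced_pal_psi i0 :
  (forall i, 1 <= i -> i0 <= i -> n i.+1 <= 2 * n i + 1) ->
  exists psi, reduced psi /\ forall i, 1 <= i -> i0 <= i -> psi i = pal_psi i.
Proof.
move=> step_le; case: (classic (exists x, w x <> w 0)) => [[x ne_x]|const].
  have [|||psi [red tail]] := exists_reduced_padding (J := maxn i0 1).
  - by rewrite leq_max orbT.
  - by move=> i; rewrite geq_max => /andP[? ?]; apply: step_le.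
  - by move=> _; exists (w x), (w 0).
  by exists psi; split=> // i i_gt0 le_i0i; apply: tail; rewrite geq_max le_i0i.
have const_w x : w x = w 0 by apply: NNPP => ne_x; apply: const; exists x.
have [//|psi [red tail]] :=
  exists_reduced_padding (ltn0Sn 0) (pal_lengths_const const_w).
by exists psi; split=> // i i_gt0 _; apply: tail.
Qed.

End PalindromicLengths.

Theorem proposition6p1 (A : Type) (w : nat -> A) (n : nat -> nat)
    (Hinf : inf_pal_prefixes w) (Hn : pal_lengths_enum w n) (i0 : nat) :
  (forall i, 1 <= i -> i0 <= i -> n i.+1 <= 2 * n i + 1) <->
  (exists psi : nat -> nat + A, reduced psi /\
     forall i, 1 <= i -> i0 <= i ->
       (exists a, psi i = inr a /\
          pal_prefix w n i.+1 = pal_prefix w n i ++ a :: pal_prefix w n i) \/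
       (exists p, psi i = inl p /\
          exists b, pal_prefix w n i = pal_prefix w n p ++ b /\
                    pal_prefix w n i.+1 = pal_prefix w n i ++ b)).
Proof.
split=> [step_le|[psi [_ psi_step]] i i_gt0 le_i0i].
- have [psi [red tail]] := exists_reduced_pal_psi Hn step_le.
  exists psi; split=> // i i_gt0 le_i0i; rewrite tail //.
  exact: (pal_psi_spec Hn i_gt0 (step_le i i_gt0 le_i0i)).
- have size_pi j : size (pal_prefix w n j) = n j by rewrite size_mkseq.
  case: (psi_step i i_gt0 le_i0i) => [[a [_ E]]|[p [_ [b [E1 E2]]]]].
  + by move/(congr1 size): E; rewrite size_cat /= !size_pi; lia.
  + move/(congr1 size): E1; move/(congr1 size): E2.
    by rewrite !size_cat !size_pi; lia.
Qed.
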